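(* Assume $\mathcal E$ is stable under pullback, $\mathcal N=\mathcal M\cap\operatorname{mor}\mathcal A$, and $\mathcal A$ is $\mathcal E$-reflective in $\mathcal X$ (i.e. $\rho_X\in\mathcal E$ for every $X\in\mathcal X$). Let $c$ be a closure operator on $\mathcal A$ and let $X\in\mathcal X$. If $R$ preserves products with $X$ (i.e. $\rho_{X\times Y}=\rho_X\times\rho_Y$ for every $Y\in\mathcal X$), then $X$ is $c^\rho$-compact if and only if $RX$ is $c$-compact.
   Context: Standing setting. $\mathcal X$ and $\mathcal A$ are finitely complete categories; $\mathcal X$ carries a proper factorization system $(\mathcal E,\mathcal M)$ and $\mathcal A$ a proper factorization system $(\mathcal F,\mathcal N)$ (proper: every member of $\mathcal E$, resp. $\mathcal F$, is an epimorphism and every member of $\mathcal M$, resp. $\mathcal N$, is a monomorphism). $\mathcal A$ is a full reflective subcategory of $\mathcal X$ with reflector $R:\mathcal X\to\mathcal A$ and reflection (unit) $\rho_X:X\to RX$; as in the paper's setting, $\mathcal N\subseteq\mathcal M$ and $R\mathcal E\subseteq\mathcal F$. For $X\in\mathcal X$, $\operatorname{sub}X$ is the class $\mathcal M/X$ of $\mathcal M$-morphisms with codomain $X$, preordered by $m\le n$ iff $m=nj$ for some morphism $j$; for $A\in\mathcal A$, $\operatorname{sub}_{\mathcal A}A=\mathcal N/A$ with the same preorder. For $f:X\to Y$ and $m\in\operatorname{sub}X$, the image $f(m)\in\operatorname{sub}Y$ is the $\mathcal M$-part of the $(\mathcal E,\mathcal M)$-factorization of $fm$, and for $n\in\operatorname{sub}Y$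 the preimage $f^{-1}(n)\in\operatorname{sub}X$ is the pullback of $n$ along $f$ (analogously in $\mathcal A$ using $(\mathcal F,\mathcal N)$). A closure operator $c$ on $\mathcal A$ (with respect to $\mathcal N$) is a family of maps $c_A:\operatorname{sub}_{\mathcal A}A\to\operatorname{sub}_{\mathcal A}A$ ($A\in\mathcal A$) such that $m\le c_A(m)$, $m\le n\Rightarrow c_A(m)\le c_A(n)$, and $f(c_A(m))\le c_B(f(m))$ for every morphism $f:A\to B$ of $\mathcal A$; closure operators on $\mathcal X$ (with respect to $\mathcal M$) are defined likewise. For an arbitrary morphism $g:M\to A$ of $\mathcal A$, write $g(1_M)$ for the $\mathcal N$-part of its $(\mathcal F,\mathcal N)$-factorization and put $c_A(g):=c_A(g(1_M))$. The $R$-initial lift of $c$ is the closure operator $c^\rho$ on $\mathcal X$ given by $c^\rho_X(m)=\rho_X^{-1}(c_{RX}(Rm))$ for $X\in\mathcal X$, $m\in\operatorname{sub}X$. For a closure operator $d$ on a category, an object $X$ is $d$-compact if for every object $Y$ the projection $\pi_Y:X\times Y\to Y$ is $d$-preserving, i.e. $\pi_Y(d_{X\times Y}(m))=d_Y(\pi_Y(m))$ for every subobject $m$ of $X\times Y$ (for $c$-compactness of an object of $\mathcal A$, $Y$ ranges over $\mathcal A$ and subobjects over $\operatorname{sub}_{\mathcal A}$; for $c^\rho$-compactness, over $\mathcal X$ and $\operatorname{sub}$). *)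

From Stdlib Require Import Classical.
Set Implicit Arguments.
Unset Strict Implicit.

Record Category := {
  Ob :> Type;
  Hom : Ob -> Ob -> Type;
  idm : forall a, Hom a a;
  comp : forall a b c, Hom b c -> Hom a b -> Hom a c;
  comp_assoc : forall a b c d (h : Hom c d) (g : Hom b c) (f : Hom a b),
      comp h (comp g f) = comp (comp h g) f;
  comp_id_l : forall a b (f : Hom a b), comp (idm b) f = f;
  comp_id_r : forall a b (f : Hom a b), comp f (idm a) = f }.
Arguments Hom {_} _ _.
Arguments idm {_} _.
Arguments comp {_ _ _ _} _ _.
Notation "g ∘ f" := (comp g f) (at level 40, left associativity).

Definition iso {C : Category} {a b : C} (f : Hom a b) : Prop :=
  exists g : Hom b a, g ∘ f = idm a /\ f ∘ g = idm b.
Definition epi {C : Category} {a b : C} (f : Hom a b) : Prop :=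
  forall c (g h : Hom b c), g ∘ f = h ∘ f -> g = h.
Definition mono {C : Category} {a b : C} (f : Hom a b) : Prop :=
  forall c (g h : Hom c a), f ∘ g = f ∘ h -> g = h.

Record Functor (C D : Category) := {
  fobj :> C -> D;
  fmap : forall a b : C, Hom a b -> Hom (fobj a) (fobj b);
  fmap_id : forall a, fmap (idm a) = idm (fobj a);
  fmap_comp : forall a b c (g : Hom b c) (f : Hom a b),
      fmap (g ∘ f) = fmap g ∘ fmap f }.
Arguments fmap {_ _} _ {_ _} _.

Definition MorClass (C : Category) := forall a b : C, Hom a b -> Prop.

Record FactSys (C : Category) := {
  fE : MorClass C;
  fM : MorClass C;
  iso_E : forall a b (f : Hom a b), iso f -> fE f;
  iso_M : forall a b (f : Hom a b), iso f -> fM f;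
  E_iso_comp : forall a b c (e : Hom a b) (i : Hom b c), fE e -> iso i -> fE (i ∘ e);
  E_comp_iso : forall a b c (i : Hom a b) (e : Hom b c), iso i -> fE e -> fE (e ∘ i);
  M_iso_comp : forall a b c (m : Hom a b) (i : Hom b c), fM m -> iso i -> fM (i ∘ m);
  M_comp_iso : forall a b c (i : Hom a b) (m : Hom b c), iso i -> fM m -> fM (m ∘ i);
  fact : forall a b (f : Hom a b),
      { z : C & { e : Hom a z & { m : Hom z b | fE e /\ fM m /\ f = m ∘ e } } };
  diag : forall a b c d (e : Hom a b) (m : Hom c d) (u : Hom a c) (v : Hom b d),
      fE e -> fM m -> m ∘ u = v ∘ e ->
      exists! w : Hom b c, w ∘ e = u /\ m ∘ w = v }.
Arguments fE {_} _ {_ _} _.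
Arguments fM {_} _ {_ _} _.

Definition proper {C : Category} (FS : FactSys C) : Prop :=
  (forall a b (f : Hom a b), fE FS f -> epi f) /\
  (forall a b (f : Hom a b), fM FS f -> mono f).

Record FinComplete (C : Category) := {
  term : C;
  to_term : forall a, Hom a term;
  to_term_uniq : forall a (f g : Hom a term), f = g;
  prod : C -> C -> C;
  pi1 : forall a b, Hom (prod a b) a;
  pi2 : forall a b, Hom (prod a b) b;
  pair : forall c a b, Hom c a -> Hom c b -> Hom c (prod a b);
  pi1_pair : forall c a b (f : Hom c a) (g : Hom c b), pi1 a b ∘ pair f g = f;
  pi2_pair : forall c a b (f : Hom c a) (g : Hom c b), pi2 a b ∘ pair f g = g;
  pair_uniq : forall c a b (u v : Hom c (prod a b)),
      pi1 a b ∘ u = pi1 a b ∘ v -> pi2 a b ∘ u = pi2 a b ∘ v -> u = v;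
  pb : forall a b c, Hom a c -> Hom b c -> C;
  pb1 : forall a b c (f : Hom a c) (g : Hom b c), Hom (pb f g) a;
  pb2 : forall a b c (f : Hom a c) (g : Hom b c), Hom (pb f g) b;
  pb_comm : forall a b c (f : Hom a c) (g : Hom b c), f ∘ pb1 f g = g ∘ pb2 f g;
  pb_univ : forall a b c (f : Hom a c) (g : Hom b c) q (q1 : Hom q a) (q2 : Hom q b),
      f ∘ q1 = g ∘ q2 -> exists u, pb1 f g ∘ u = q1 /\ pb2 f g ∘ u = q2;
  pb_uniq : forall a b c (f : Hom a c) (g : Hom b c) q (u v : Hom q (pb f g)),
      pb1 f g ∘ u = pb1 f g ∘ v -> pb2 f g ∘ u = pb2 f g ∘ v -> u = v }.
Arguments prod {_} _ _ _.
Arguments pi1 {_} _ _ _.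
Arguments pi2 {_} _ _ _.
Arguments pair {_} _ {_ _ _} _ _.
Arguments pb {_} _ {_ _ _} _ _.
Arguments pb1 {_} _ {_ _ _} _ _.
Arguments pb2 {_} _ {_ _ _} _ _.

Record Reflection (X A : Category) := {
  incl : Functor A X;
  incl_full : forall a b (f : Hom (incl a) (incl b)), exists g, fmap incl g = f;
  incl_faithful : forall a b (g h : Hom a b), fmap incl g = fmap incl h -> g = h;
  refl : Functor X A;
  unit : forall x : X, Hom x (incl (refl x));
  unit_nat : forall x y (f : Hom x y),
      fmap incl (fmap refl f) ∘ unit x = unit y ∘ f;
  unit_univ : forall (x : X) (a : A) (f : Hom x (incl a)),
      exists! g : Hom (refl x) a, fmap incl g ∘ unit x = f }.
Arguments incl {_ _} _.
Arguments refl {_ _} _.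
Arguments unit {_ _} _ _.

Section Subobjects.
Variable C : Category.

Definition sub (M : MorClass C) (x : C) : Type :=
  { s : C & { m : Hom s x | M _ _ m } }.
Definition subm {M : MorClass C} {x : C} (s : sub M x) : Hom (projT1 s) x :=
  proj1_sig (projT2 s).
Definition sub_le {M : MorClass C} {x : C} (s t : sub M x) : Prop :=
  exists j : Hom (projT1 s) (projT1 t), subm s = subm t ∘ j.
Definition sub_eqv {M : MorClass C} {x : C} (s t : sub M x) : Prop :=
  sub_le s t /\ sub_le t s.

Variable FS : FactSys C.

Definition img_of {a b : C} (g : Hom a b) : sub (@fM _ FS) b :=
  let t := fact FS g in
  existT _ (projT1 t)
    (exist _ (proj1_sig (projT2 (projT2 t)))
             (proj1 (proj2 (proj2_sig (projT2 (projT2 t)))))).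

Definition image {a b : C} (f : Hom a b) (m : sub (@fM _ FS) a) : sub (@fM _ FS) b :=
  img_of (f ∘ subm m).

Lemma pb_M (FC : FinComplete C) (s x y : C) (m : Hom s x) (f : Hom y x) :
  fM FS m -> fM FS (pb2 FC m f).
Proof.
  intros Hm.
  destruct (fact FS (pb2 FC m f)) as [z [e [n [He [Hn Hp]]]]].
  assert (Hsq : m ∘ pb1 FC m f = (f ∘ n) ∘ e).
  { rewrite pb_comm, Hp, comp_assoc. reflexivity. }
  destruct (@diag C FS _ _ _ _ _ _ _ _ He Hm Hsq) as [d [[Hd1 Hd2] _]].
  destruct (@pb_univ C FC _ _ _ m f _ d n Hd2) as [u [Hu1 Hu2]].
  assert (Hue : u ∘ e = idm _).
  { apply (@pb_uniq C FC _ _ _ m f).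
    - rewrite comp_assoc, Hu1, Hd1, comp_id_r. reflexivity.
    - rewrite comp_assoc, Hu2, <- Hp, comp_id_r. reflexivity. }
  assert (Hsq2 : n ∘ e = n ∘ e) by reflexivity.
  destruct (@diag C FS _ _ _ _ _ _ _ _ He Hn Hsq2) as [w [_ Hw]].
  assert (Heu : e ∘ u = idm _).
  { transitivity w.
    - symmetry. apply Hw. split.
      + rewrite <- comp_assoc, Hue, comp_id_r. reflexivity.
      + rewrite comp_assoc, <- Hp, Hu2. reflexivity.
    - apply Hw. split; [apply comp_id_l | apply comp_id_r]. }
  rewrite Hp. apply (@M_comp_iso C FS). { exists u. split; assumption. } exact Hn.
Qed.

Definition preimage (FC : FinComplete C) {a b : C} (f : Hom a b)
    (n : sub (@fM _ FS) b) : sub (@fM _ FS) a :=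
  existT _ (pb FC (subm n) f)
    (exist _ (pb2 FC (subm n) f) (@pb_M FC _ _ _ (subm n) f (proj2_sig (projT2 n)))).

Definition ClOp := forall x : C, sub (@fM _ FS) x -> sub (@fM _ FS) x.

Definition is_closure_op (c : ClOp) : Prop :=
  (forall x (m : sub (@fM _ FS) x), sub_le m (c x m)) /\
  (forall x (m n : sub (@fM _ FS) x), sub_le m n -> sub_le (c x m) (c x n)) /\
  (forall x y (f : Hom x y) (m : sub (@fM _ FS) x),
      sub_le (image f (c x m)) (c y (image f m))).

Definition preserving (d : ClOp) {a b : C} (f : Hom a b) : Prop :=
  forall m : sub (@fM _ FS) a, sub_eqv (image f (d a m)) (d b (image f m)).

Definition compact (FC : FinComplete C) (d : ClOp) (x : C) : Prop :=
  forall y : C, preserving d (pi2 FC x y).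

End Subobjects.

Arguments img_of {_} _ {_ _} _.
Arguments image {_} _ {_ _} _ _.
Arguments preimage {_} _ _ {_ _} _ _.
Arguments is_closure_op {_} _ _.
Arguments compact {_} _ _ _ _.

(* c^rho_X(m) = rho_X^{-1}(c_{RX}(Rm)), where c_{RX}(Rm) := c_{RX}((Rm)(1)).
   The N-subobject c_{RX}(Rm) of RX is regarded as an M-subobject of the
   X-object RX via the inclusion, using N ⊆ M (hypothesis [hNM]). *)
Definition crho {CX CA : Category} (FCX : FinComplete CX)
    (FSX : FactSys CX) (FSA : FactSys CA) (Rf : Reflection CX CA)
    (hNM : forall (a b : CA) (g : Hom a b), fM FSA g -> fM FSX (fmap (incl Rf) g))
    (c : ClOp FSA) : ClOp FSX :=
  fun x m =>
    let n := c (refl Rf x) (img_of FSA (fmap (refl Rf) (subm m))) in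
    preimage FSX FCX (unit Rf x)
      (existT _ (incl Rf (projT1 n))
         (exist _ (fmap (incl Rf) (subm n)) (hNM _ _ _ (proj2_sig (projT2 n))))).
Arguments crho {CX CA} FCX FSX FSA Rf hNM c _ _.

From Stdlib Require Import Setoid Morphisms.

(* The lift c^ρ is computed by pulling back along ρ, so everything hinges on
   how images along a projection p : X × Y -> Y interact with preimages along
   ρ.  When R(X × Y) ≅ RX × RY, every generalized element of ρ_Y^{-1}((Rp)(n))
   can be lifted, after covering by E-maps, to ρ_{X×Y}^{-1}(n); this gives the
   Beck–Chevalley identity p(ρ^{-1}(n)) = ρ^{-1}((Rp)(n)).  Combined with
   R(ρ^{-1}(n)) = n and R(f(m)) = (Rf)(Rm), both consequences of ρ ∈ E and
   RE ⊆ F, it shows that p is c^ρ-preserving iff Rp is c-preserving.  Up to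
   isomorphism Rp is the projection RX × RY -> RY, and every object of A is
   isomorphic to some RY, so this says exactly that RX is c-compact. *)

Lemma iso_comp {C : Category} {a b d : C} (f : Hom a b) (g : Hom b d) :
  iso f -> iso g -> iso (g ∘ f).
Proof.
  intros [f' [F1 F2]] [g' [G1 G2]]. exists (f' ∘ g'). split.
  - rewrite comp_assoc, <- (comp_assoc f' g' g), G1, comp_id_r, F1. reflexivity.
  - rewrite comp_assoc, <- (comp_assoc g f f'), F2, comp_id_r, G2. reflexivity.
Qed.

Lemma iso_mono {C : Category} {a b : C} (f : Hom a b) : iso f -> mono f.
Proof.
  intros [g [Hgf _]] z u v H.
  rewrite <- (comp_id_l u), <- (comp_id_l v), <- Hgf, <- !comp_assoc, H. reflexivity.
Qed.

Lemma fmap_iso {C D : Category} (F : Functor C D) {a b : C} (f : Hom a b) :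
  iso f -> iso (fmap F f).
Proof.
  intros [g [H1 H2]]. exists (fmap F g).
  rewrite <- !fmap_comp, H1, H2, !fmap_id. split; reflexivity.
Qed.

Lemma id_times_iso {C : Category} (FC : FinComplete C) {a b b' : C} (e : Hom b b') :
  iso e -> iso (pair FC (pi1 FC a b) (e ∘ pi2 FC a b)).
Proof.
  intros [e' [He'e Hee']]. exists (pair FC (pi1 FC a b') (e' ∘ pi2 FC a b')).
  split; apply pair_uniq.
  - rewrite comp_assoc, !pi1_pair, comp_id_r. reflexivity.
  - rewrite comp_assoc, pi2_pair, <- comp_assoc, pi2_pair, comp_assoc, He'e, comp_id_l,
      comp_id_r. reflexivity.
  - rewrite comp_assoc, !pi1_pair, comp_id_r. reflexivity.
  - rewrite comp_assoc, pi2_pair, <- comp_assoc, pi2_pair, comp_assoc, Hee', comp_id_l,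
      comp_id_r. reflexivity.
Qed.

#[export] Instance sub_le_preorder (C : Category) (M : MorClass C) (x : C) :
  PreOrder (@sub_le C M x).
Proof.
  split.
  - intros s. exists (idm _). now rewrite comp_id_r.
  - intros s t u [j Hj] [k Hk]. exists (k ∘ j). now rewrite Hj, Hk, comp_assoc.
Qed.

#[export] Instance sub_eqv_equivalence (C : Category) (M : MorClass C) (x : C) :
  Equivalence (@sub_eqv C M x).
Proof.
  split.
  - intros s. split; reflexivity.
  - intros s t [Hst Hts]. split; assumption.
  - intros s t u [Hst Hts] [Htu Hut]. split; etransitivity; eassumption.
Qed.

#[export] Instance sub_le_proper (C : Category) (M : MorClass C) (x : C) :
  Proper (@sub_eqv C M x ==> @sub_eqv C M x ==> iff) (@sub_le C M x).
Proof.
  intros s s' [Hs Hs'] t t' [Ht Ht']. split; intros H.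
  - now rewrite Hs', <- Ht.
  - now rewrite Hs, <- Ht'.
Qed.

Section FactorizationSystem.
Variables (C : Category) (FS : FactSys C).
Notation S x := (sub (@fM C FS) x).

Lemma subm_M {x : C} (s : S x) : fM FS (subm s).
Proof. exact (proj2_sig (projT2 s)). Qed.

Lemma img_of_factor {a b : C} (g : Hom a b) :
  exists e : Hom a (projT1 (img_of FS g)), fE FS e /\ g = subm (img_of FS g) ∘ e.
Proof.
  unfold img_of, subm; simpl.
  destruct (fact FS g) as [z [e [m [He [Hm Hg]]]]]; simpl.
  exists e. split; assumption.
Qed.

Lemma sub_le_through_E {x w : C} (s t : S x) (e : Hom w (projT1 s)) (u : Hom w (projT1 t)) :
  fE FS e -> subm s ∘ e = subm t ∘ u -> sub_le s t.
Proof.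
  intros He H.
  destruct (diag He (subm_M t) (eq_sym H)) as [d [[_ Hd] _]].
  exists d. symmetry. exact Hd.
Qed.

Lemma sub_le_through_E2 {x w w' : C} (s t : S x) (e1 : Hom w (projT1 s)) (e2 : Hom w' w)
    (u : Hom w' (projT1 t)) :
  fE FS e1 -> fE FS e2 -> subm s ∘ e1 ∘ e2 = subm t ∘ u -> sub_le s t.
Proof.
  intros He1 He2 H.
  destruct (diag He2 (subm_M t) (eq_sym H)) as [d [[_ Hd] _]].
  apply (sub_le_through_E s t e1 d He1). symmetry. exact Hd.
Qed.

Lemma img_of_le {a x : C} (g : Hom a x) (t : S x) (u : Hom a (projT1 t)) :
  g = subm t ∘ u -> sub_le (img_of FS g) t.
Proof.
  intros H. destruct (img_of_factor g) as [e [He Hg]].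
  apply (sub_le_through_E _ t e u He). rewrite <- Hg. exact H.
Qed.

Lemma img_of_ge {a x w : C} (g : Hom a x) (t : S x) (e : Hom w (projT1 t)) (v : Hom w a) :
  fE FS e -> subm t ∘ e = g ∘ v -> sub_le t (img_of FS g).
Proof.
  intros He H. destruct (img_of_factor g) as [e' [He' Hg]].
  apply (sub_le_through_E t _ e (e' ∘ v) He). rewrite H, comp_assoc, <- Hg. reflexivity.
Qed.

Lemma image_mono {a b : C} (f : Hom a b) (s t : S a) :
  sub_le s t -> sub_le (image FS f s) (image FS f t).
Proof.
  intros [j Hj]. destruct (img_of_factor (f ∘ subm t)) as [e [He Ht]].
  apply img_of_le with (u := e ∘ j). rewrite Hj, !comp_assoc, <- Ht. reflexivity.
Qed.

#[export] Instance image_proper {a b : C} (f : Hom a b) :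
  Proper (@sub_eqv C _ _ ==> @sub_eqv C _ _) (image FS f).
Proof. intros s t [Hst Hts]. split; apply image_mono; assumption. Qed.

Lemma image_comp {a b d : C} (f : Hom a b) (g : Hom b d) (m : S a) :
  sub_eqv (image FS (g ∘ f) m) (image FS g (image FS f m)).
Proof.
  unfold image.
  set (k := img_of FS (f ∘ subm m)).
  destruct (img_of_factor (f ∘ subm m)) as [e1 [He1 H1]]. fold k in e1, H1.
  destruct (img_of_factor (g ∘ subm k)) as [e2 [He2 H2]].
  split.
  - apply img_of_le with (u := e2 ∘ e1).
    rewrite <- comp_assoc, H1, !comp_assoc, <- H2. reflexivity.
  - destruct (img_of_factor (g ∘ f ∘ subm m)) as [e3 [He3 H3]].
    apply (sub_le_through_E2 _ _ e2 e1 e3 He2 He1).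
    rewrite <- H2, <- comp_assoc, <- H1, comp_assoc. exact H3.
Qed.

Lemma image_id {a : C} (m : S a) : sub_eqv (image FS (idm a) m) m.
Proof.
  unfold image. split.
  - apply img_of_le with (u := idm _). rewrite comp_id_l, comp_id_r. reflexivity.
  - apply img_of_ge with (e := idm _) (v := idm _).
    + apply (iso_E FS). exists (idm _). split; apply comp_id_l.
    + rewrite comp_id_l, !comp_id_r. reflexivity.
Qed.

Lemma E_iso_of_comp_M {a b d : C} (e : Hom a b) (g : Hom b d) :
  fE FS e -> fM FS (g ∘ e) -> epi e -> iso e.
Proof.
  intros He Hm He_epi.
  destruct (diag (u := idm a) (v := g) He Hm) as [k [[Hke Hk] _]].
  { apply comp_id_r. }
  exists k. split; [exact Hke|].
  apply He_epi. rewrite <- comp_assoc, Hke, comp_id_l, comp_id_r. reflexivity.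
Qed.

Lemma M_iso_of_comp_E {a b d : C} (g : Hom a b) (m : Hom b d) :
  fM FS m -> fE FS (m ∘ g) -> mono m -> iso m.
Proof.
  intros Hm He Hm_mono.
  destruct (diag (u := g) (v := idm d) He Hm) as [k [[_ Hk] _]].
  { symmetry. apply comp_id_l. }
  exists k. split; [|exact Hk].
  apply Hm_mono. rewrite comp_assoc, Hk, comp_id_l, comp_id_r. reflexivity.
Qed.

Section Closure.
Variable c : ClOp FS.
Hypothesis hc : is_closure_op FS c.

Lemma closure_mono {x : C} (s t : S x) : sub_le s t -> sub_le (c x s) (c x t).
Proof. apply (proj1 (proj2 hc)). Qed.

#[local] Instance closure_proper (x : C) : Proper (@sub_eqv C _ _ ==> @sub_eqv C _ _) (c x).
Proof. intros s t [Hst Hts]. split; apply closure_mono; assumption. Qed.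

Lemma closure_image {x y : C} (f : Hom x y) (m : S x) :
  sub_le (image FS f (c x m)) (c y (image FS f m)).
Proof. apply (proj2 (proj2 hc)). Qed.

Lemma image_inv {x y : C} (f : Hom x y) (g : Hom y x) (m : S x) :
  g ∘ f = idm x -> sub_eqv (image FS g (image FS f m)) m.
Proof. intros Hgf. now rewrite <- image_comp, Hgf, image_id. Qed.

Lemma closure_image_iso {x y : C} (f : Hom x y) (m : S x) :
  iso f -> sub_eqv (image FS f (c x m)) (c y (image FS f m)).
Proof.
  intros [g [Hgf Hfg]]. split; [apply closure_image|].
  rewrite <- (image_inv g f (c y (image FS f m)) Hfg).
  apply image_mono.
  rewrite closure_image, image_inv by exact Hgf. reflexivity.
Qed.

Lemma preserving_transport {P Q Y Z : C} (ψ : Hom P Q) (ε : Hom Y Z)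
    (p : Hom P Y) (q : Hom Q Z) :
  iso ψ -> iso ε -> q ∘ ψ = ε ∘ p -> preserving c p -> preserving c q.
Proof.
  intros Hψ Hε Hsq Hp m.
  destruct Hψ as [ψ' [Hψ'ψ Hψψ']].
  rewrite <- (image_inv ψ' ψ m Hψψ').
  set (n := image FS ψ' m).
  rewrite <- closure_image_iso by (exists ψ'; split; assumption).
  rewrite <- !image_comp, Hsq, !image_comp, (Hp n), closure_image_iso by exact Hε.
  reflexivity.
Qed.

End Closure.
End FactorizationSystem.

Section Pullbacks.
Variables (C : Category) (FS : FactSys C) (FC : FinComplete C).
Notation S x := (sub (@fM C FS) x).

Lemma subm_preimage {a b : C} (f : Hom a b) (t : S b) :
  subm (preimage FS FC f t) = pb2 FC (subm t) f.
Proof. reflexivity. Qed.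

Lemma preimage_mono {a b : C} (f : Hom a b) (s t : S b) :
  sub_le s t -> sub_le (preimage FS FC f s) (preimage FS FC f t).
Proof.
  intros [j Hj].
  destruct (pb_univ FC (f := subm t) (g := f) (q1 := j ∘ pb1 FC (subm s) f)
     (q2 := pb2 FC (subm s) f)) as [k [_ Hk]].
  { rewrite comp_assoc, <- Hj. apply pb_comm. }
  exists k. rewrite !subm_preimage. symmetry. exact Hk.
Qed.

Hypothesis hEpb : forall (a b d : C) (e : Hom a d) (f : Hom b d),
  fE FS e -> fE FS (pb2 FC e f).

(* The two pullbacks of [f] and [e] differ by the canonical swap isomorphism. *)
Lemma pb1_E {a b d : C} (f : Hom a d) (e : Hom b d) : fE FS e -> fE FS (pb1 FC f e).
Proof.
  intros He.
  destruct (pb_univ FC (f := e) (g := f) (q1 := pb2 FC f e) (q2 := pb1 FC f e))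
    as [u [Hu1 Hu2]]. { symmetry. apply pb_comm. }
  destruct (pb_univ FC (f := f) (g := e) (q1 := pb2 FC e f) (q2 := pb1 FC e f))
    as [v [Hv1 Hv2]]. { symmetry. apply pb_comm. }
  assert (Hvu : v ∘ u = idm _).
  { apply (pb_uniq (f0 := FC) (f := f) (g := e)).
    - rewrite comp_assoc, Hv1, Hu2, comp_id_r. reflexivity.
    - rewrite comp_assoc, Hv2, Hu1, comp_id_r. reflexivity. }
  assert (Huv : u ∘ v = idm _).
  { apply (pb_uniq (f0 := FC) (f := e) (g := f)).
    - rewrite comp_assoc, Hu1, Hv2, comp_id_r. reflexivity.
    - rewrite comp_assoc, Hu2, Hv1, comp_id_r. reflexivity. }
  rewrite <- Hu2. apply E_comp_iso; [exists v; split; assumption|]. apply hEpb, He.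
Qed.

Lemma image_preimage {a b : C} (f : Hom a b) (t : S b) :
  fE FS f -> sub_eqv (image FS f (preimage FS FC f t)) t.
Proof.
  intros Hf. unfold image. rewrite subm_preimage.
  pose proof (pb_comm FC (subm t) f) as Hc.
  split.
  - apply img_of_le with (u := pb1 FC (subm t) f). symmetry. exact Hc.
  - apply img_of_ge with (e := pb1 FC (subm t) f) (v := idm _).
    + apply pb1_E, Hf.
    + rewrite comp_id_r. exact Hc.
Qed.

End Pullbacks.

Section Reflection.
Variables (CX CA : Category) (FCX : FinComplete CX) (FCA : FinComplete CA)
  (FSX : FactSys CX) (FSA : FactSys CA) (Rf : Reflection CX CA).
Notation I := (incl Rf).
Notation R := (refl Rf).
Notation ρ := (unit Rf).
Notation SX x := (sub (@fM CX FSX) x).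
Notation SA a := (sub (@fM CA FSA) a).

Lemma unit_factor {x : CX} {a : CA} (g : Hom x (I a)) : exists h, fmap I h ∘ ρ x = g.
Proof. destruct (unit_univ g) as [h [Hh _]]. exists h. exact Hh. Qed.

Lemma unit_ext {x : CX} {a : CA} (g h : Hom (R x) a) :
  fmap I g ∘ ρ x = fmap I h ∘ ρ x -> g = h.
Proof.
  intros H. destruct (unit_univ (fmap I h ∘ ρ x)) as [k [_ Hk]].
  transitivity k; [symmetry|]; apply Hk; [exact H | reflexivity].
Qed.

Lemma counit_iso (a : CA) :
  exists ε : Hom (R (I a)) a, iso ε /\ fmap I ε ∘ ρ (I a) = idm _.
Proof.
  destruct (unit_factor (idm (I a))) as [ε Hε].
  destruct (incl_full (ρ (I a))) as [η Hη].
  exists ε. split; [|exact Hε].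
  exists η. split.
  - apply unit_ext. rewrite fmap_comp, <- comp_assoc, Hε, comp_id_r, Hη, fmap_id, comp_id_l.
    reflexivity.
  - apply (incl_faithful (r := Rf)). rewrite fmap_comp, Hη, Hε, fmap_id. reflexivity.
Qed.

Hypothesis hN : forall (a b : CA) (g : Hom a b), fM FSA g -> fM FSX (fmap I g).

Definition incl_sub {a : CA} (n : SA a) : SX (I a) :=
  existT _ (I (projT1 n)) (exist _ (fmap I (subm n)) (hN _ _ _ (proj2_sig (projT2 n)))).

Lemma incl_sub_le {a : CA} (s t : SA a) : sub_le (incl_sub s) (incl_sub t) <-> sub_le s t.
Proof.
  split.
  - intros [j Hj]. destruct (incl_full j) as [j' Hj']. exists j'.
    apply (incl_faithful (r := Rf)). rewrite fmap_comp, Hj'. exact Hj.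
  - intros [j Hj]. exists (fmap I j). change (fmap I (subm s) = fmap I (subm t) ∘ fmap I j).
    rewrite <- fmap_comp, <- Hj. reflexivity.
Qed.

Definition unit_preimage {x : CX} (n : SA (R x)) : SX x :=
  preimage FSX FCX (ρ x) (incl_sub n).

Definition refl_sub {x : CX} (m : SX x) : SA (R x) := img_of FSA (fmap R (subm m)).

Lemma crho_unfold (c : ClOp FSA) {x : CX} (m : SX x) :
  crho FCX FSX FSA Rf hN c x m = unit_preimage (c (R x) (refl_sub m)).
Proof. reflexivity. Qed.

#[export] Instance unit_preimage_proper {x : CX} :
  Proper (@sub_eqv CA _ _ ==> @sub_eqv CX _ _) (@unit_preimage x).
Proof.
  intros s t [Hst Hts]. unfold unit_preimage.
  split; apply preimage_mono; apply incl_sub_le; assumption.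
Qed.

Hypothesis hEpb : forall (a b d : CX) (e : Hom a d) (f : Hom b d),
  fE FSX e -> fE FSX (pb2 FCX e f).
Hypothesis hErefl : forall x : CX, fE FSX (unit Rf x).

Lemma unit_preimage_reflect {x : CX} (s t : SA (R x)) :
  sub_eqv (unit_preimage s) (unit_preimage t) -> sub_eqv s t.
Proof.
  unfold unit_preimage. intros H.
  apply (image_proper _ FSX (ρ x)) in H.
  rewrite !image_preimage in H by (exact hEpb || apply hErefl).
  destruct H as [Hst Hts]. split; apply incl_sub_le; assumption.
Qed.

Hypothesis hRE : forall (x y : CX) (f : Hom x y), fE FSX f -> fE FSA (fmap R f).

Lemma refl_sub_unit_preimage {x : CX} (n : SA (R x)) :
  sub_eqv (refl_sub (unit_preimage n)) n.
Proof.
  unfold refl_sub.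
  change (subm (unit_preimage n)) with (pb2 FCX (fmap I (subm n)) (ρ x)).
  set (t := pb2 FCX (fmap I (subm n)) (ρ x)).
  set (k := pb1 FCX (fmap I (subm n)) (ρ x)).
  assert (Hk : fmap I (subm n) ∘ k = ρ x ∘ t) by apply pb_comm.
  destruct (unit_factor k) as [kt Hkt].
  assert (Ht : fmap R t = subm n ∘ kt).
  { apply unit_ext. rewrite unit_nat, <- Hk, <- Hkt, fmap_comp, comp_assoc. reflexivity. }
  destruct (counit_iso (projT1 n)) as [ε [Hε Hερ]].
  assert (Hkt_E : fE FSA kt).
  { replace kt with (ε ∘ fmap R k).
    - apply E_iso_comp; [apply hRE, pb1_E, hErefl; exact hEpb | exact Hε].
    - apply unit_ext.
      rewrite Hkt, !fmap_comp, <- comp_assoc, unit_nat, comp_assoc, Hερ, comp_id_l.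
      reflexivity. }
  split.
  - apply img_of_le with (u := kt). exact Ht.
  - apply img_of_ge with (e := kt) (v := idm _); [exact Hkt_E|].
    rewrite comp_id_r. symmetry. exact Ht.
Qed.

Lemma refl_sub_image {x y : CX} (f : Hom x y) (m : SX x) :
  sub_eqv (refl_sub (image FSX f m)) (image FSA (fmap R f) (refl_sub m)).
Proof.
  unfold refl_sub, image.
  destruct (img_of_factor CX FSX (f ∘ subm m)) as [e [He Hfm]].
  set (i := img_of FSX (f ∘ subm m)) in *.
  destruct (img_of_factor CA FSA (fmap R (subm m))) as [ek [Hek Hk]].
  set (k := img_of FSA (fmap R (subm m))) in *.
  destruct (img_of_factor CA FSA (fmap R (subm i))) as [eL [HeL HL]].
  destruct (img_of_factor CA FSA (fmap R f ∘ subm k)) as [eR [HeR HR]].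
  assert (Hsq : fmap R (subm i) ∘ fmap R e = fmap R f ∘ fmap R (subm m)).
  { rewrite <- !fmap_comp, Hfm. reflexivity. }
  split.
  - apply (sub_le_through_E2 CA FSA _ _ eL (fmap R e) (eR ∘ ek) HeL (hRE _ _ _ He)).
    rewrite <- HL, Hsq, Hk, !comp_assoc, <- HR. reflexivity.
  - apply (sub_le_through_E2 CA FSA _ _ eR ek (eL ∘ fmap R e) HeR Hek).
    rewrite <- HR, <- comp_assoc, <- Hk, <- Hsq, comp_assoc, <- HL. reflexivity.
Qed.


Hypothesis hMN : forall (a b : CA) (g : Hom a b), fM FSX (fmap I g) -> fM FSA g.
Hypothesis hpropX : proper FSX.
Hypothesis hpropA : proper FSA.

(* Factor [I f = m ∘ e]: the [M]-part [m] forces [ρ] at its domain to be an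
   isomorphism, so [m] lies in [A], and then [f ∈ F] forces [m] to be an isomorphism. *)
Lemma incl_E {a b : CA} (f : Hom a b) : fE FSA f -> fE FSX (fmap I f).
Proof.
  intros Hf.
  destruct (fact FSX (fmap I f)) as [z [e [m [He [Hm Hfm]]]]].
  destruct (unit_factor m) as [mt Hmt].
  assert (Hρ : iso (ρ z)).
  { apply (E_iso_of_comp_M CX FSX (ρ z) (fmap I mt)); [apply hErefl | | ].
    - rewrite Hmt. exact Hm.
    - apply (proj1 hpropX), hErefl. }
  destruct (incl_full (ρ z ∘ e)) as [et Het].
  assert (Hf_fact : f = mt ∘ et).
  { apply (incl_faithful (r := Rf)). rewrite fmap_comp, Het, comp_assoc, Hmt. exact Hfm. }
  assert (Hmt_M : fM FSA mt).
  { apply hMN. destruct Hρ as [d [Hdρ Hρd]].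
    replace (fmap I mt) with (m ∘ d).
    - apply M_comp_iso; [exists (ρ z); split; assumption | exact Hm].
    - rewrite <- Hmt, <- comp_assoc, Hρd, comp_id_r. reflexivity. }
  assert (Hmt_iso : iso mt).
  { apply (M_iso_of_comp_E CA FSA et mt Hmt_M); [rewrite <- Hf_fact; exact Hf|].
    apply (proj2 hpropA), Hmt_M. }
  rewrite Hf_fact, fmap_comp, Het.
  apply E_iso_comp; [apply E_iso_comp; assumption | apply fmap_iso, Hmt_iso].
Qed.

Definition beck_chevalley {x y : CX} (f : Hom x y) : Prop :=
  forall n : SA (R x),
    sub_eqv (image FSX f (unit_preimage n)) (unit_preimage (image FSA (fmap R f) n)).

Lemma crho_preserving_iff (c : ClOp FSA) (hc : is_closure_op FSA c) {x y : CX} (f : Hom x y) :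
  beck_chevalley f ->
  preserving (crho FCX FSX FSA Rf hN c) f <-> preserving c (fmap R f).
Proof.
  intros Hbc.
  pose proof (closure_proper CA FSA c hc).
  split.
  - intros Hf n.
    apply unit_preimage_reflect.
    specialize (Hf (unit_preimage n)).
    rewrite !crho_unfold, (Hbc _), refl_sub_image, refl_sub_unit_preimage in Hf.
    exact Hf.
  - intros Hf m.
    rewrite !crho_unfold, (Hbc _), refl_sub_image, (Hf (refl_sub m)).
    reflexivity.
Qed.

Lemma image_unit_preimage_le {x y : CX} (f : Hom x y) (n : SA (R x)) :
  sub_le (image FSX f (unit_preimage n)) (unit_preimage (image FSA (fmap R f) n)).
Proof.
  unfold image at 1.
  change (subm (unit_preimage n)) with (pb2 FCX (fmap I (subm n)) (ρ x)).
  set (t := pb2 FCX (fmap I (subm n)) (ρ x)).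
  set (k := pb1 FCX (fmap I (subm n)) (ρ x)).
  assert (Hk : fmap I (subm n) ∘ k = ρ x ∘ t) by apply pb_comm.
  destruct (img_of_factor CA FSA (fmap R f ∘ subm n)) as [e [_ Hq]].
  change (img_of FSA (fmap R f ∘ subm n)) with (image FSA (fmap R f) n) in *.
  set (q := image FSA (fmap R f) n) in *.
  destruct (pb_univ FCX (f := fmap I (subm q)) (g := ρ y) (q1 := fmap I e ∘ k) (q2 := f ∘ t))
    as [u [_ Hu]].
  { rewrite comp_assoc, <- fmap_comp, <- Hq, fmap_comp, <- comp_assoc, Hk, comp_assoc,
      unit_nat, comp_assoc. reflexivity. }
  apply img_of_le with (u := u). symmetry. exact Hu.
Qed.

Section Products.
Variables X Y : CX.
Notation P := (prod FCX X Y).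
Notation p1 := (pi1 FCX X Y).
Notation p2 := (pi2 FCX X Y).
Hypothesis hφ : iso (pair FCA (fmap R p1) (fmap R p2)).

Lemma incl_refl_prod_ext {W : CX} (g h : Hom W (I (R P))) :
  fmap I (fmap R p1) ∘ g = fmap I (fmap R p1) ∘ h ->
  fmap I (fmap R p2) ∘ g = fmap I (fmap R p2) ∘ h -> g = h.
Proof.
  intros H1 H2.
  destruct (unit_factor g) as [gt <-]. destruct (unit_factor h) as [ht <-].
  enough (gt = ht) as -> by reflexivity.
  apply (iso_mono _ hφ). apply pair_uniq; rewrite !comp_assoc, ?pi1_pair, ?pi2_pair;
    apply unit_ext; rewrite !fmap_comp, <- !comp_assoc; assumption.
Qed.

Lemma unit_preimage_image_pi2_le (n : SA (R P)) :
  sub_le (unit_preimage (image FSA (fmap R p2) n)) (image FSX p2 (unit_preimage n)).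
Proof.
  unfold image at 2.
  change (subm (unit_preimage n)) with (pb2 FCX (fmap I (subm n)) (ρ P)).
  set (t := pb2 FCX (fmap I (subm n)) (ρ P)).
  set (k := pb1 FCX (fmap I (subm n)) (ρ P)).
  destruct (img_of_factor CA FSA (fmap R p2 ∘ subm n)) as [f [Hf Hq]].
  change (img_of FSA (fmap R p2 ∘ subm n)) with (image FSA (fmap R p2) n) in *.
  set (q := image FSA (fmap R p2) n) in *.
  change (subm (unit_preimage q)) with (pb2 FCX (fmap I (subm q)) (ρ Y)).
  set (s := pb2 FCX (fmap I (subm q)) (ρ Y)).
  set (h := pb1 FCX (fmap I (subm q)) (ρ Y)).
  assert (Hs : fmap I (subm q) ∘ h = ρ Y ∘ s) by apply pb_comm.
  destruct (img_of_factor CX FSX (p2 ∘ t)) as [et [_ Ht]].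
  (* Lift a generalized element of [ρ_Y^{-1}(q)] first along [I f ∈ E], then
     along [ρ_X ∈ E], to an element of [ρ_P^{-1}(n)] lying over it. *)
  set (σ := pb2 FCX (fmap I f) h).
  set (w := pb1 FCX (fmap I f) h).
  assert (Hσ : fmap I f ∘ w = h ∘ σ) by apply pb_comm.
  assert (Hσ_E : fE FSX σ) by (apply hEpb, incl_E, Hf).
  set (r := fmap I (fmap R p1) ∘ (fmap I (subm n) ∘ w)).
  set (τ := pb2 FCX (ρ X) r).
  set (ξ := pb1 FCX (ρ X) r).
  assert (Hτ : ρ X ∘ ξ = r ∘ τ) by apply pb_comm.
  assert (Hτ_E : fE FSX τ) by (apply hEpb, hErefl).
  set (z := pair FCX ξ (s ∘ σ ∘ τ)).
  assert (Hz : fmap I (subm n) ∘ (w ∘ τ) = ρ P ∘ z).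
  { apply incl_refl_prod_ext.
    - rewrite (@comp_assoc CX _ _ _ _ _ (ρ P) z), unit_nat, <- comp_assoc.
      unfold z. rewrite pi1_pair, Hτ. unfold r. rewrite <- !comp_assoc. reflexivity.
    - rewrite (@comp_assoc CX _ _ _ _ _ (ρ P) z), unit_nat, <- comp_assoc.
      unfold z. rewrite pi2_pair, (@comp_assoc CX _ _ _ _ (fmap I (fmap R p2))), <- fmap_comp,
        Hq, fmap_comp, <- !comp_assoc, (@comp_assoc CX _ _ _ _ (fmap I f)), Hσ, <- !comp_assoc,
        (@comp_assoc CX _ _ _ _ (fmap I (subm q))), Hs, <- !comp_assoc.
      reflexivity. }
  destruct (pb_univ FCX (f := fmap I (subm n)) (g := ρ P) (q1 := w ∘ τ) (q2 := z) Hz)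
    as [g [_ Hg]].
  apply (sub_le_through_E2 CX FSX (unit_preimage q) (img_of FSX (p2 ∘ t)) σ τ (et ∘ g)
           Hσ_E Hτ_E).
  change (subm (unit_preimage q)) with s. fold t in Hg.
  rewrite comp_assoc, <- Ht, <- (@comp_assoc CX _ _ _ _ p2), Hg. unfold z.
  rewrite pi2_pair. reflexivity.
Qed.

Lemma beck_chevalley_pi2 : beck_chevalley p2.
Proof. split; [apply image_unit_preimage_le | apply unit_preimage_image_pi2_le]. Qed.

End Products.

Lemma compact_iff_refl_pi2_preserving (c : ClOp FSA) (hc : is_closure_op FSA c) (X : CX) :
  (forall Y : CX, iso (pair FCA (fmap R (pi1 FCX X Y)) (fmap R (pi2 FCX X Y)))) ->
  (forall Y : CX, preserving c (fmap R (pi2 FCX X Y))) <-> compact FSA FCA c (R X).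
Proof.
  intros hpres. split; intros H.
  - intros B. destruct (counit_iso B) as [ε [Hε _]].
    apply (preserving_transport CA FSA c hc
             (pair FCA (pi1 FCA (R X) (R (I B))) (ε ∘ pi2 FCA (R X) (R (I B))) ∘
                pair FCA (fmap R (pi1 FCX X (I B))) (fmap R (pi2 FCX X (I B))))
             ε (fmap R (pi2 FCX X (I B)))).
    + apply iso_comp; [apply hpres | apply id_times_iso, Hε].
    + exact Hε.
    + rewrite comp_assoc, pi2_pair, <- comp_assoc, pi2_pair. reflexivity.
    + apply H.
  - intros Y. destruct (hpres Y) as [φ' [Hφ'φ Hφφ']].
    apply (preserving_transport CA FSA c hc φ' (idm _) (pi2 FCA (R X) (R Y))).
    + exists (pair FCA (fmap R (pi1 FCX X Y)) (fmap R (pi2 FCX X Y))). split; assumption.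
    + exists (idm _). split; apply comp_id_l.
    + rewrite <- (pi2_pair FCA (fmap R (pi1 FCX X Y)) (fmap R (pi2 FCX X Y))), <- comp_assoc,
        Hφφ', comp_id_l, comp_id_r. reflexivity.
    + apply H.
Qed.

End Reflection.

Theorem corollary2p10
  (CX CA : Category) (FCX : FinComplete CX) (FCA : FinComplete CA)
  (FSX : FactSys CX) (FSA : FactSys CA) (Rf : Reflection CX CA)
  (hpropX : proper FSX) (hpropA : proper FSA)
  (* N = M ∩ mor A (in particular N ⊆ M) *)
  (hNM : forall (a b : CA) (g : Hom a b), fM FSA g <-> fM FSX (fmap (incl Rf) g))
  (* R E ⊆ F *)
  (hRE : forall (x y : CX) (f : Hom x y), fE FSX f -> fE FSA (fmap (refl Rf) f))
  (* E is stable under pullback *)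
  (hEpb : forall (a b c : CX) (e : Hom a c) (f : Hom b c),
      fE FSX e -> fE FSX (pb2 FCX e f))
  (* A is E-reflective *)
  (hErefl : forall x : CX, fE FSX (unit Rf x))
  (c : ClOp FSA) (hc : is_closure_op FSA c)
  (X : CX)
  (* R preserves products with X: the comparison R(X×Y) -> RX × RY is an iso *)
  (hpres : forall Y : CX,
      iso (pair FCA (fmap (refl Rf) (pi1 FCX X Y)) (fmap (refl Rf) (pi2 FCX X Y)))) :
  compact FSX FCX (crho FCX FSX FSA Rf (fun a b g h => proj1 (hNM a b g) h) c) X
  <-> compact FSA FCA c (refl Rf X).
Proof.
  set (hN := fun a b g h => proj1 (hNM a b g) h).
  set (hMN := fun a b g h => proj2 (hNM a b g) h).
  assert (Hpi2 : forall Y : CX,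
             preserving (crho FCX FSX FSA Rf hN c) (pi2 FCX X Y)
             <-> preserving c (fmap (refl Rf) (pi2 FCX X Y))).
  { intros Y. apply (crho_preserving_iff CX CA FCX FSX FSA Rf hN hEpb hErefl hRE c hc).
    exact (beck_chevalley_pi2 CX CA FCX FCA FSX FSA Rf hN hEpb hErefl hMN hpropX hpropA
             X Y (hpres Y)). }
  rewrite <- (compact_iff_refl_pi2_preserving CX CA FCX FCA FSA Rf c hc X hpres).
  split; intros H Y; apply Hpi2, H.
Qed.
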